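(* Let $k \geq 2$ be an integer and $n := 2^k$. Let $R_k$ denote either $R_k(t) := |P_k(e^{it})|^2$ or $R_k(t) := |Q_k(e^{it})|^2$ (the statement holds for each choice). Then the equation $R_k(t) = n$ has at least $n/4 + 1$ distinct zeros in $K$. Moreover, with $t_j := 2\pi j/n$, there are at least $n/2 + 2$ values of $j \in \{0,1,\ldots,n-1\}$ for which the closed interval $[t_j, t_{j+1}]$ contains at least one solution $t$ of $R_k(t) = n$.
   Context: The Rudin-Shapiro polynomials are defined recursively by $P_0(z) := 1$, $Q_0(z) := 1$, and for $k = 0,1,2,\ldots$: $P_{k+1}(z) := P_k(z) + z^{2^k} Q_k(z)$, $Q_{k+1}(z) := P_k(z) - z^{2^k} Q_k(z)$. Thus $P_k$ and $Q_k$ are polynomials of degree $n-1$, $n = 2^k$, with all coefficients in $\{-1,1\}$. $K := \mathbb{R} \pmod{2\pi}$, i.e. zeros are counted on one period $[0,2\pi)$. *)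

From Stdlib Require Import Reals ZArith Arith List.
Open Scope R_scope.

(* Polynomials with integer coefficients are represented by their
   coefficient functions  nat -> Z  (coefficient of z^j). *)

Definition coef_add_shift (A : nat -> Z) (m : nat) (B : nat -> Z) : nat -> Z :=
  fun j => (A j + (if Nat.leb m j then B (j - m)%nat else 0))%Z.

Definition coef_sub_shift (A : nat -> Z) (m : nat) (B : nat -> Z) : nat -> Z :=
  fun j => (A j - (if Nat.leb m j then B (j - m)%nat else 0))%Z.

(* Rudin-Shapiro pair (P_k, Q_k) as coefficient functions:
   P_0 = Q_0 = 1,  P_{k+1} = P_k + z^{2^k} Q_k,  Q_{k+1} = P_k - z^{2^k} Q_k. *)
Fixpoint RS (k : nat) : (nat -> Z) * (nat -> Z) :=
  match k with
  | O => (fun j => if Nat.eqb j 0 then 1%Z else 0%Z,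
          fun j => if Nat.eqb j 0 then 1%Z else 0%Z)
  | S k' => let (P, Q) := RS k' in
            (coef_add_shift P (2 ^ k') Q, coef_sub_shift P (2 ^ k') Q)
  end.

Definition Pcoef (k : nat) : nat -> Z := fst (RS k).
Definition Qcoef (k : nat) : nat -> Z := snd (RS k).

Fixpoint rsum (N : nat) (f : nat -> R) : R :=
  match N with
  | O => 0
  | S N' => rsum N' f + f N'
  end.

(* For a polynomial with coefficients c of degree < N,
   |p(e^{it})|^2 = (Re p(e^{it}))^2 + (Im p(e^{it}))^2. *)
Definition sqmod_on_circle (c : nat -> Z) (N : nat) (t : R) : R :=
  (rsum N (fun j => IZR (c j) * cos (INR j * t))) ^ 2
  + (rsum N (fun j => IZR (c j) * sin (INR j * t))) ^ 2.

(* R_k(t) = |P_k(e^{it})|^2  (usesP = true)  or  |Q_k(e^{it})|^2 (usesP = false).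
   P_k, Q_k have degree 2^k - 1, so summing over j < 2^k is exact. *)
Definition Rk (usesP : bool) (k : nat) (t : R) : R :=
  sqmod_on_circle (if usesP then Pcoef k else Qcoef k) (2 ^ k) t.

(* At the grid points t_j = 2 pi j / n, where z^(n/2) = (-1)^j, two doubling steps give
   R_k(t_j) - n = +-(-1)^j h(t_j) with h := 4 |P_(k-2)|^2 - n, thanks to the
   Rudin-Shapiro identity |P_m|^2 + |Q_m|^2 = 2^(m+1).  Hence on each cell
   [t_j, t_(j+1)] either R_k - n changes sign (weakly), and has a zero there by the
   intermediate value theorem, or h changes sign strictly inside the cell.  Now h is a
   polynomial of degree < n/4 in cos t, so unless it vanishes identically it has at
   most 2 (n/4 - 1) zeros on a period: at least n/2 + 2 cells carry a zero of R_k - n.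
   Cells of equal parity are not adjacent, so one parity class yields at least
   n/4 + 1 distinct zeros. *)

From Stdlib Require Import Reals ZArith Arith List Lia Lra.
From mathcomp Require all_boot all_algebra Rstruct.
Open Scope R_scope.

Lemma rsum_ext N f g : (forall i, (i < N)%nat -> f i = g i) -> rsum N f = rsum N g.
Proof.
induction N as [|N IH]; intros H; simpl; [reflexivity|].
rewrite IH, H; [reflexivity | lia | intros; apply H; lia].
Qed.

Lemma rsum_plus N f g : rsum N (fun i => f i + g i) = rsum N f + rsum N g.
Proof. induction N as [|N IH]; simpl; [ring | rewrite IH; ring]. Qed.

Lemma rsum_scal N a f : rsum N (fun i => a * f i) = a * rsum N f.
Proof. induction N as [|N IH]; simpl; [ring | rewrite IH; ring]. Qed.

Lemma rsum_add_length M N f :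
  rsum (M + N) f = rsum M f + rsum N (fun i => f (M + i)%nat).
Proof.
induction N as [|N IH]; simpl; [rewrite Nat.add_0_r; ring|].
rewrite Nat.add_succ_r; simpl; rewrite IH; ring.
Qed.

Lemma rsum_mul N f g :
  rsum N f * rsum N g = rsum N (fun j => rsum N (fun l => f j * g l)).
Proof.
rewrite Rmult_comm, <- rsum_scal; apply rsum_ext; intros j _.
rewrite Rmult_comm, <- rsum_scal; reflexivity.
Qed.

Lemma continuity_rsum N (F : nat -> R -> R) :
  (forall i, continuity (F i)) -> continuity (fun t => rsum N (fun i => F i t)).
Proof.
intros HF; induction N as [|N IH]; simpl.
- apply continuity_const; intros x y; reflexivity.
- exact (continuity_plus _ _ IH (HF N)).
Qed.

Lemma cos_chebyshev_rec l t :
  cos (INR (S (S l)) * t) = 2 * cos t * cos (INR (S l) * t) - cos (INR l * t).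
Proof.
replace (INR (S (S l)) * t) with (INR (S l) * t + t) by (rewrite !S_INR; ring).
replace (INR l * t) with (INR (S l) * t - t) by (rewrite !S_INR; ring).
rewrite cos_plus, cos_minus; ring.
Qed.

Module CosinePolynomial.
Import all_boot all_algebra Rstruct.
Import GRing.Theory.
Local Open Scope ring_scope.
Local Open Scope R_scope.

Definition cos_poly (D : nat) (f : R -> R) : Prop :=
  exists p : {poly R}, (size p <= D.+1)%N /\ forall t, f t = p.[cos t].

Lemma cos_poly_ext D f g : (forall t, f t = g t) -> cos_poly D f -> cos_poly D g.
Proof. by move=> efg [p [sp ep]]; exists p; split=> // t; rewrite -efg. Qed.

Lemma cos_poly_const D c : cos_poly D (fun _ => c).
Proof.
exists c%:P; split=> [|t]; last by rewrite hornerC.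
exact: leq_trans (size_polyC_leq1 c) _.
Qed.

Lemma cos_poly_add D f g :
  cos_poly D f -> cos_poly D g -> cos_poly D (fun t => f t + g t).
Proof.
move=> [p [sp ep]] [q [sq eq']]; exists (p + q)%R; split=> [|t].
  by apply: leq_trans (size_polyD _ _) _; rewrite geq_max sp sq.
by rewrite hornerD ep eq'.
Qed.

Lemma cos_poly_scal D a f : cos_poly D f -> cos_poly D (fun t => a * f t).
Proof.
move=> [p [sp ep]]; exists (a *: p)%R; split=> [|t].
  exact: leq_trans (size_scale_leq _ _) sp.
by rewrite hornerZ ep.
Qed.

Lemma cos_poly_rsum D N (F : nat -> R -> R) :
  (forall i, (i < N)%coq_nat -> cos_poly D (F i)) ->
  cos_poly D (fun t => rsum N (fun i => F i t)).
Proof.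
elim: N => [|N IH] HF /=; first exact: cos_poly_const.
apply: cos_poly_add; last exact: HF.
by apply: IH => i Hi; apply: HF; lia.
Qed.

Lemma chebyshev l :
  exists p : {poly R}, (size p <= l.+1)%N /\ forall t, p.[cos t] = cos (INR l * t).
Proof.
suff [p [q [[sp ep] [sq eq']]]] : exists p q : {poly R},
    ((size p <= l.+1)%N /\ forall t, p.[cos t] = cos (INR l * t))
    /\ ((size q <= l.+2)%N /\ forall t, q.[cos t] = cos (INR l.+1 * t)).
  by exists p.
elim: l => [|l [p [q [[sp ep] [sq eq']]]]].
  exists 1%R, 'X; rewrite size_poly1 size_polyX.
  by split; split=> // t; rewrite ?hornerC ?hornerX ?Rmult_0_l ?Rmult_1_l ?cos_0.
exists q, ('X * (q + q) - p)%R; split; split=> // [|t].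
  apply: leq_trans (size_polyD _ _) _; rewrite geq_max size_polyN.
  rewrite (leq_trans sp) ?andbT; last exact: leqW.
  apply: leq_trans (size_polyMleq _ _) _; rewrite size_polyX add2n /= ltnS.
  by apply: leq_trans (size_polyD _ _) _; rewrite maxnn.
rewrite hornerD hornerN hornerM hornerD hornerX ep eq' cos_chebyshev_rec.
(* [ring] needs the equation stated at the Stdlib type [R]. *)
rewrite -!RplusE -RoppE -RmultE.
by match goal with |- ?a = ?b => change (@Logic.eq R a b) end; ring.
Qed.

Lemma cos_poly_cos D d : (d <= D)%coq_nat -> cos_poly D (fun t => cos (INR d * t)).
Proof.
move=> dD; have [p [sp ep]] := chebyshev d.
by exists p; split=> [|t]; [apply: leq_trans sp _; rewrite ltnS; apply/leP | rewrite ep].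
Qed.

Lemma cos_poly_reflect D f t : cos_poly D f -> f (2 * PI - t) = f t.
Proof.
move=> [p [_ ep]]; rewrite !ep; congr (p.[_]).
by rewrite cos_minus cos_2PI sin_2PI Rmult_1_l Rmult_0_l Rplus_0_r.
Qed.

Lemma mem_In {T : eqType} (x : T) (L : seq T) : x \in L -> In x L.
Proof. by elim: L => [|y L IH] //=; rewrite in_cons => /orP [/eqP ->|/IH]; auto. Qed.

Lemma NoDup_uniq {T : eqType} {L : seq T} : NoDup L -> uniq L.
Proof.
elim: L => [|x L IH] //= /NoDup_cons_iff [xL NL].
by rewrite IH // andbT; apply/negP => /mem_In.
Qed.

Lemma cos_poly_zeros_upto_PI D f : cos_poly D f ->
  (forall t, f t = 0) \/
  forall L, NoDup L -> (forall t, In t L -> 0 <= t <= PI /\ f t = 0) ->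
  (length L <= D)%coq_nat.
Proof.
move=> [p [sp ep]]; have [p_eq0 | p0] := eqVneq p 0%R.
  by left=> t; rewrite ep p_eq0 horner0.
right=> L NL HL.
have NcL : NoDup (map cos L).
  apply: NoDup_map_NoDup_ForallPairs NL => x y Hx Hy.
  by have [? _] := HL x Hx; have [? _] := HL y Hy; apply: cos_inj.
have rootL : all (root p) (map cos L).
  apply/allP => _ /mem_In /in_map_iff [t [<- Ht]].
  by apply/eqP; rewrite -ep; case: (HL t Ht).
have := max_poly_roots p0 rootL (NoDup_uniq NcL).
rewrite size_map => H; apply/leP; rewrite -ltnS; exact: leq_trans H sp.
Qed.

End CosinePolynomial.

Import CosinePolynomial.

Definition re_circle (c : nat -> Z) (N : nat) (t : R) : R :=
  rsum N (fun j => IZR (c j) * cos (INR j * t)).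
Definition im_circle (c : nat -> Z) (N : nat) (t : R) : R :=
  rsum N (fun j => IZR (c j) * sin (INR j * t)).

Lemma sqmod_on_circleE c N t :
  sqmod_on_circle c N t = re_circle c N t ^ 2 + im_circle c N t ^ 2.
Proof. reflexivity. Qed.

Lemma continuity_sqmod_on_circle c N : continuity (sqmod_on_circle c N).
Proof.
assert (Hre : continuity (re_circle c N)).
{ apply (continuity_rsum N (fun j t => IZR (c j) * cos (INR j * t))); intros j; reg. }
assert (Him : continuity (im_circle c N)).
{ apply (continuity_rsum N (fun j t => IZR (c j) * sin (INR j * t))); intros j; reg. }
assert (Hone : continuity (fun _ => 1)) by (apply continuity_const; intros x y; reflexivity).
change (continuity (fun t => re_circle c N t * (re_circle c N t * 1)
                          + im_circle c N t * (im_circle c N t * 1))).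
apply continuity_plus; repeat apply continuity_mult; assumption.
Qed.

Lemma sqmod_on_circle_2PI c N : sqmod_on_circle c N (2 * PI) = sqmod_on_circle c N 0.
Proof.
assert (Hcos : forall j, cos (INR j * (2 * PI)) = cos (INR j * 0)).
{ intros j; rewrite Rmult_0_r, <- (cos_period 0 j); f_equal; ring. }
assert (Hsin : forall j, sin (INR j * (2 * PI)) = sin (INR j * 0)).
{ intros j; rewrite Rmult_0_r, <- (sin_period 0 j); f_equal; ring. }
unfold sqmod_on_circle; f_equal; f_equal; apply rsum_ext; intros j _;
  rewrite ?Hcos, ?Hsin; reflexivity.
Qed.

Lemma cos_mul_add_sin_mul (j l : nat) t :
  cos (INR j * t) * cos (INR l * t) + sin (INR j * t) * sin (INR l * t)
  = cos (INR ((j - l) + (l - j)) * t).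
Proof.
rewrite <- cos_minus; destruct (Nat.le_ge_cases l j).
- replace ((j - l) + (l - j))%nat with (j - l)%nat by lia.
  rewrite minus_INR by lia; f_equal; ring.
- replace ((j - l) + (l - j))%nat with (l - j)%nat by lia.
  rewrite minus_INR, <- cos_neg by lia; f_equal; ring.
Qed.

Lemma cos_poly_sqmod_on_circle c N : cos_poly (N - 1) (sqmod_on_circle c N).
Proof.
apply (cos_poly_ext _ (fun t => rsum N (fun j => rsum N (fun l =>
         IZR (c j) * IZR (c l) * cos (INR ((j - l) + (l - j)) * t))))).
- intros t; rewrite sqmod_on_circleE, <- !Rsqr_pow2; unfold Rsqr, re_circle, im_circle.
  rewrite !rsum_mul, <- rsum_plus; apply rsum_ext; intros j _.
  rewrite <- rsum_plus; apply rsum_ext; intros l _.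
  rewrite <- cos_mul_add_sin_mul; ring.
- apply cos_poly_rsum; intros j Hj; apply cos_poly_rsum; intros l Hl.
  apply cos_poly_scal, cos_poly_cos; lia.
Qed.

Definition period_zeros_le (f : R -> R) (M : nat) : Prop :=
  forall L, NoDup L -> (forall t, In t L -> 0 <= t < 2 * PI /\ f t = 0) ->
  (length L <= M)%nat.

Lemma cos_poly_zeros D f :
  cos_poly D f -> (forall t, f t = 0) \/ period_zeros_le f (2 * D).
Proof.
intros Hf; destruct (cos_poly_zeros_upto_PI D f Hf) as [Hzero | Hhalf]; [now left | right].
intros L NL HL.
set (lower := fun t => if Rle_dec t PI then true else false).
assert (Hlow : (length (filter lower L) <= D)%nat).
{ apply Hhalf; [now apply NoDup_filter|].
  intros t Ht; apply filter_In in Ht as [Ht Hlt]; unfold lower in Hlt.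
  destruct (Rle_dec t PI); [|discriminate].
  destruct (HL t Ht) as [[] ?]; split; [lra | assumption]. }
assert (Hup : (length (map (fun t : R => (2 * PI - t)%R)
                            (filter (fun t => negb (lower t)) L)) <= D)%nat).
{ apply Hhalf.
  - apply NoDup_map_NoDup_ForallPairs; [intros x y _ _ E; lra | now apply NoDup_filter].
  - intros s Hs; apply in_map_iff in Hs as [t [<- Ht]].
    apply filter_In in Ht as [Ht Hgt]; unfold lower in Hgt.
    destruct (Rle_dec t PI); [discriminate|].
    destruct (HL t Ht) as [[] Hft]; split; [lra|].
    rewrite (cos_poly_reflect D f t Hf); exact Hft. }
rewrite length_map in Hup; rewrite <- (filter_length lower L); lia.
Qed.

(* Real and imaginary parts of [z^m c(z)] at [z = e^(it)]. *)
Definition re_rotated (c : nat -> Z) (m : nat) (t : R) : R :=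
  cos (INR m * t) * re_circle c m t - sin (INR m * t) * im_circle c m t.
Definition im_rotated (c : nat -> Z) (m : nat) (t : R) : R :=
  sin (INR m * t) * re_circle c m t + cos (INR m * t) * im_circle c m t.

Lemma sqmod_rotated c m t :
  re_rotated c m t ^ 2 + im_rotated c m t ^ 2 = sqmod_on_circle c m t.
Proof.
rewrite sqmod_on_circleE; unfold re_rotated, im_rotated.
pose proof (sin2_cos2 (INR m * t)) as Hsc; unfold Rsqr in Hsc.
transitivity ((sin (INR m * t) * sin (INR m * t) + cos (INR m * t) * cos (INR m * t))
              * (re_circle c m t ^ 2 + im_circle c m t ^ 2)); [ring | rewrite Hsc; ring].
Qed.

Lemma re_im_circle_shift (c A B : nat -> Z) (m : nat) (s : Z) t :
  (forall i, (i < m)%nat -> c i = A i) ->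
  (forall i, (i < m)%nat -> c (m + i)%nat = (s * B i)%Z) ->
  re_circle c (m + m) t = re_circle A m t + IZR s * re_rotated B m t
  /\ im_circle c (m + m) t = im_circle A m t + IZR s * im_rotated B m t.
Proof.
intros HA HB; unfold re_rotated, im_rotated, re_circle, im_circle.
set (u := cos (INR m * t)); set (v := sin (INR m * t)).
rewrite !rsum_add_length.
assert (Hlow : forall g : R -> R, rsum m (fun i => IZR (c i) * g (INR i * t))
                              = rsum m (fun i => IZR (A i) * g (INR i * t))).
{ intros g; apply rsum_ext; intros i Hi; rewrite HA by exact Hi; reflexivity. }
rewrite !Hlow; split; f_equal.
- rewrite (rsum_ext m _ (fun i => IZR s * u * (IZR (B i) * cos (INR i * t))
                                  + - IZR s * v * (IZR (B i) * sin (INR i * t)))).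
  + rewrite rsum_plus, !rsum_scal; ring.
  + intros i Hi; rewrite HB, mult_IZR, plus_INR, Rmult_plus_distr_r, cos_plus by exact Hi.
    unfold u, v; ring.
- rewrite (rsum_ext m _ (fun i => IZR s * v * (IZR (B i) * cos (INR i * t))
                                  + IZR s * u * (IZR (B i) * sin (INR i * t)))).
  + rewrite rsum_plus, !rsum_scal; ring.
  + intros i Hi; rewrite HB, mult_IZR, plus_INR, Rmult_plus_distr_r, sin_plus by exact Hi.
    unfold u, v; ring.
Qed.

Definition rs_coef (b : bool) (k : nat) : nat -> Z := if b then Pcoef k else Qcoef k.
Definition rs_sign (b : bool) : Z := if b then 1%Z else (-1)%Z.

Lemma Rk_sqmod b k t : Rk b k t = sqmod_on_circle (rs_coef b k) (2 ^ k) t.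
Proof. reflexivity. Qed.

Lemma rs_coef_succ b k j :
  rs_coef b (S k) j
  = (Pcoef k j + if Nat.leb (2 ^ k) j then rs_sign b * Qcoef k (j - 2 ^ k) else 0)%Z.
Proof.
unfold rs_coef, Pcoef, Qcoef; simpl; destruct (RS k) as [P Q].
unfold coef_add_shift, coef_sub_shift, rs_sign.
destruct b; cbn [fst snd]; destruct (Nat.leb (2 ^ k) j); ring.
Qed.

Lemma rs_coef_vanish k j : (2 ^ k <= j)%nat -> Pcoef k j = 0%Z /\ Qcoef k j = 0%Z.
Proof.
revert j; induction k as [|k IH]; intros j Hj.
- unfold Pcoef, Qcoef; simpl in *; destruct j; [lia | auto].
- change (Pcoef (S k) j) with (rs_coef true (S k) j).
  change (Qcoef (S k) j) with (rs_coef false (S k) j).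
  rewrite !rs_coef_succ; simpl in Hj.
  replace (Nat.leb (2 ^ k) j) with true by (symmetry; apply Nat.leb_le; lia).
  destruct (IH j) as [-> _]; [lia|]; destruct (IH (j - 2 ^ k)%nat) as [_ ->]; [lia|].
  split; ring.
Qed.

Lemma re_im_rs_succ b k t :
  re_circle (rs_coef b (S k)) (2 ^ S k) t
  = re_circle (Pcoef k) (2 ^ k) t + IZR (rs_sign b) * re_rotated (Qcoef k) (2 ^ k) t
  /\ im_circle (rs_coef b (S k)) (2 ^ S k) t
  = im_circle (Pcoef k) (2 ^ k) t + IZR (rs_sign b) * im_rotated (Qcoef k) (2 ^ k) t.
Proof.
replace (2 ^ S k)%nat with (2 ^ k + 2 ^ k)%nat by (simpl; lia).
apply re_im_circle_shift; intros i Hi; rewrite rs_coef_succ.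
- replace (Nat.leb (2 ^ k) i) with false by (symmetry; apply Nat.leb_gt; lia); ring.
- replace (Nat.leb (2 ^ k) (2 ^ k + i)) with true by (symmetry; apply Nat.leb_le; lia).
  rewrite (proj1 (rs_coef_vanish k (2 ^ k + i) ltac:(lia))).
  replace (2 ^ k + i - 2 ^ k)%nat with i by lia; ring.
Qed.

(* The real part of [P_k(z) * conj (z^(2^k) Q_k(z))] on the unit circle. *)
Definition rs_cross (k : nat) (t : R) : R :=
  re_circle (Pcoef k) (2 ^ k) t * re_rotated (Qcoef k) (2 ^ k) t
  + im_circle (Pcoef k) (2 ^ k) t * im_rotated (Qcoef k) (2 ^ k) t.

Lemma Rk_succ b k t :
  Rk b (S k) t = Rk true k t + Rk false k t + 2 * IZR (rs_sign b) * rs_cross k t.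
Proof.
rewrite !Rk_sqmod, sqmod_on_circleE.
destruct (re_im_rs_succ b k t) as [-> ->].
rewrite <- (sqmod_rotated (rs_coef false k)), (sqmod_on_circleE (rs_coef true k)).
unfold rs_cross; destruct b; cbn [rs_coef rs_sign]; ring.
Qed.

Lemma rudin_shapiro_identity k t : Rk true k t + Rk false k t = INR (2 ^ S k).
Proof.
induction k as [|k IH].
- unfold Rk, sqmod_on_circle, Pcoef, Qcoef; simpl.
  rewrite Rmult_0_l, cos_0, sin_0; ring.
- rewrite !Rk_succ, IH, (pow_INR 2 (S (S k))), (pow_INR 2 (S k)); simpl; ring.
Qed.

Lemma rs_cross_succ k t :
  sin (INR (2 ^ S k) * t) = 0 ->
  rs_cross (S k) t = cos (INR (2 ^ S k) * t) * (Rk true k t - Rk false k t).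
Proof.
intros Hsin; unfold rs_cross, re_rotated, im_rotated; rewrite Hsin.
change (Pcoef (S k)) with (rs_coef true (S k)).
change (Qcoef (S k)) with (rs_coef false (S k)).
destruct (re_im_rs_succ true k t) as [-> ->].
destruct (re_im_rs_succ false k t) as [-> ->].
rewrite !Rk_sqmod, <- (sqmod_rotated (rs_coef false k)), sqmod_on_circleE.
cbn [rs_coef rs_sign]; ring.
Qed.

Definition grid (n j : nat) : R := 2 * PI * INR j / INR n.

Lemma grid_lt n i j : (0 < n)%nat -> (i < j)%nat -> grid n i < grid n j.
Proof.
intros Hn Hij; unfold grid, Rdiv; pose proof PI_RGT_0.
apply Rmult_lt_compat_r; [apply Rinv_0_lt_compat, lt_0_INR; exact Hn|].
apply Rmult_lt_compat_l; [lra | apply lt_INR; exact Hij].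
Qed.

Lemma grid_le n i j : (0 < n)%nat -> (i <= j)%nat -> grid n i <= grid n j.
Proof.
intros Hn Hij; destruct (Nat.eq_dec i j) as [<-|]; [lra|].
left; apply grid_lt; lia.
Qed.

Lemma grid_0 n : grid n 0 = 0.
Proof. unfold grid; simpl; unfold Rdiv; ring. Qed.

Lemma grid_n n : (0 < n)%nat -> grid n n = 2 * PI.
Proof. intros Hn; unfold grid; field; apply not_0_INR; lia. Qed.

Lemma cos_sin_INR_mul_PI j : cos (INR j * PI) = (-1) ^ j /\ sin (INR j * PI) = 0.
Proof.
induction j as [|j [Hc Hs]].
- simpl; rewrite Rmult_0_l, cos_0, sin_0; auto.
- rewrite S_INR, Rmult_plus_distr_r, Rmult_1_l, neg_cos, neg_sin, Hc, Hs; simpl; split; ring.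
Qed.

(* At [t = 2 pi j / 2^(K+2)] one has [z^(2^(K+1)) = (-1)^j], so the cross term of
   the last doubling step is [(-1)^j (|P_K|^2 - |Q_K|^2)]. *)
Lemma Rk_grid b K j :
  let n := (2 ^ S (S K))%nat in
  Rk b (S (S K)) (grid n j) - INR n
  = IZR (rs_sign b) * (-1) ^ j * (4 * Rk true K (grid n j) - INR n).
Proof.
intros n; set (t := grid n j).
assert (Hn : INR n = 2 * INR (2 ^ S K)) by (unfold n; rewrite !pow_INR; simpl; ring).
assert (Hmt : INR (2 ^ S K) * t = INR j * PI).
{ unfold t, grid; rewrite Hn.
  assert (INR (2 ^ S K) <> 0) by (apply not_0_INR, Nat.pow_nonzero; lia).
  field; assumption. }
destruct (cos_sin_INR_mul_PI j) as [Hc Hs]; rewrite <- Hmt in Hc, Hs.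
rewrite Rk_succ, rudin_shapiro_identity, (rs_cross_succ K t Hs), Hc.
replace (Rk false K t) with (INR (2 ^ S K) - Rk true K t)
  by (rewrite <- (rudin_shapiro_identity K t); ring).
fold n; rewrite Hn; ring.
Qed.

Definition ivt_root (f : R -> R) (hf : continuity f) (x y : R) : R :=
  match Rle_dec x y, Rle_dec (f x * f y) 0 with
  | left hxy, left hs => proj1_sig (IVT_cor f x y hf hxy hs)
  | _, _ => x
  end.

Lemma ivt_root_spec f hf x y :
  x <= y -> f x * f y <= 0 ->
  x <= ivt_root f hf x y <= y /\ f (ivt_root f hf x y) = 0.
Proof.
intros hxy hs; unfold ivt_root.
destruct (Rle_dec x y) as [h1|]; [|contradiction].
destruct (Rle_dec (f x * f y) 0) as [h2|]; [|contradiction].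
exact (proj2_sig (IVT_cor f x y hf h1 h2)).
Qed.

Section SignChanges.

Variables (n : nat) (g h : R -> R).
Hypotheses (n_pos : (0 < n)%nat) (g_cont : continuity g) (h_cont : continuity h).
Hypothesis sign_alternation :
  forall j, g (grid n j) * g (grid n (S j)) = - (h (grid n j) * h (grid n (S j))).

Definition brackets (j : nat) : bool :=
  if Rle_dec (g (grid n j) * g (grid n (S j))) 0 then true else false.

Definition bracketed : list nat := filter brackets (seq 0 n).

Definition g_root (j : nat) : R := ivt_root g g_cont (grid n j) (grid n (S j)).
Definition h_root (j : nat) : R := ivt_root h h_cont (grid n j) (grid n (S j)).

Lemma g_root_spec j :
  brackets j = true -> grid n j <= g_root j <= grid n (S j) /\ g (g_root j) = 0.
Proof.
unfold brackets; destruct (Rle_dec _ 0) as [Hs|]; [intros _|discriminate].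
apply ivt_root_spec; [apply grid_le; lia | exact Hs].
Qed.

Lemma h_root_spec j :
  brackets j = false -> grid n j < h_root j < grid n (S j) /\ h (h_root j) = 0.
Proof.
unfold brackets; rewrite sign_alternation.
destruct (Rle_dec _ 0) as [|Hs]; [discriminate | intros _].
destruct (ivt_root_spec h h_cont (grid n j) (grid n (S j))) as [[H1 H2] H0];
  [apply grid_le; lia | lra |].
fold (h_root j) in H1, H2, H0; split; [|exact H0].
split.
- destruct H1 as [|E]; [assumption|]; rewrite <- E, H0 in *; lra.
- destruct H2 as [|E]; [assumption|]; rewrite E, H0 in *; lra.
Qed.

Lemma unbracketed_length M :
  (forall t, h t = 0) \/ period_zeros_le h M ->
  (length (filter (fun j => negb (brackets j)) (seq 0 n)) <= M)%nat.
Proof.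
set (L := filter (fun j => negb (brackets j)) (seq 0 n)).
assert (HL : forall j, In j L -> (j < n)%nat /\ brackets j = false).
{ intros j Hj; apply filter_In in Hj as [Hj Hb]; apply in_seq in Hj.
  split; [lia | destruct (brackets j); [discriminate | reflexivity]]. }
intros [Hzero | Hle].
- destruct L as [|j L'] eqn:EL; [simpl; lia|].
  destruct (HL j) as [_ Hb]; [left; reflexivity|].
  destruct (h_root_spec j Hb) as [_ Hr].
  unfold brackets in Hb; rewrite sign_alternation, !Hzero in Hb.
  destruct (Rle_dec _ 0); [discriminate | lra].
- rewrite <- (length_map h_root); apply Hle.
  + apply NoDup_map_NoDup_ForallPairs; [|apply NoDup_filter, seq_NoDup].
    assert (Hlt : forall x y, In x L -> In y L -> (x < y)%nat -> h_root x < h_root y).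
    { intros x y Hx Hy Hxy.
      destruct (HL x Hx) as [_ Bx], (HL y Hy) as [_ By].
      destruct (h_root_spec x Bx) as [[_ Rx] _], (h_root_spec y By) as [[Ry _] _].
      pose proof (grid_le n (S x) y n_pos Hxy); lra. }
    intros x y Hx Hy E; destruct (Nat.lt_total x y) as [Hxy|[Hxy|Hxy]]; [| exact Hxy |];
      [pose proof (Hlt x y Hx Hy Hxy) | pose proof (Hlt y x Hy Hx Hxy)]; lra.
  + intros t Ht; apply in_map_iff in Ht as [j [<- Hj]].
    destruct (HL j Hj) as [Hjn Bj]; destruct (h_root_spec j Bj) as [[R1 R2] R0].
    pose proof (grid_le n 0 j n_pos (Nat.le_0_l j)).
    pose proof (grid_le n (S j) n n_pos Hjn).
    rewrite grid_0 in *; rewrite grid_n in * by exact n_pos; split; [lra | exact R0].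
Qed.

Lemma bracketed_length M :
  (forall t, h t = 0) \/ period_zeros_le h M -> (n - M <= length bracketed)%nat.
Proof.
intros Hh; pose proof (unbracketed_length M Hh) as Hu.
pose proof (filter_length brackets (seq 0 n)) as Hl; rewrite length_seq in Hl.
unfold bracketed; lia.
Qed.

Lemma bracketed_spec j : In j bracketed -> (j < n)%nat /\ brackets j = true.
Proof. unfold bracketed; rewrite filter_In, in_seq; intros [? ?]; split; [lia | assumption]. Qed.

Lemma g_root_lt i j :
  brackets i = true -> brackets j = true -> (S i < j)%nat -> g_root i < g_root j.
Proof.
intros Bi Bj Hij.
destruct (g_root_spec i Bi) as [[_ Ri] _], (g_root_spec j Bj) as [[Rj _] _].
pose proof (grid_lt n (S i) j n_pos Hij); lra.
Qed.

Hypotheses (n_even : Nat.even n = true) (g_period : g (2 * PI) = g 0).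

Definition wrap (t : R) : R := if Req_dec_T t (2 * PI) then 0 else t.

Definition parity_roots (e : bool) : list R :=
  map (fun j => wrap (g_root j)) (filter (fun j => Bool.eqb (Nat.even j) e) bracketed).

Lemma g_root_range j : In j bracketed -> 0 <= g_root j <= 2 * PI.
Proof.
intros Hj; destruct (bracketed_spec j Hj) as [Hjn Bj].
destruct (g_root_spec j Bj) as [[R1 R2] _].
pose proof (grid_le n 0 j n_pos (Nat.le_0_l j)).
pose proof (grid_le n (S j) n n_pos Hjn).
rewrite grid_0 in *; rewrite grid_n in * by exact n_pos; lra.
Qed.

Lemma parity_roots_zeros e t : In t (parity_roots e) -> 0 <= t < 2 * PI /\ g t = 0.
Proof.
intros Ht; apply in_map_iff in Ht as [j [<- Hj]]; apply filter_In in Hj as [Hj _].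
pose proof (g_root_range j Hj) as Hr.
destruct (g_root_spec j (proj2 (bracketed_spec j Hj))) as [_ R0].
unfold wrap; destruct (Req_dec_T (g_root j) (2 * PI)) as [E|E].
- rewrite <- g_period, <- E; pose proof PI_RGT_0; split; [lra | exact R0].
- split; [lra | exact R0].
Qed.

(* Roots of non-adjacent cells are strictly ordered; after identifying [2 pi] with [0],
   the only possible collision is between the cells [0] and [n - 1], of opposite parity. *)
Lemma wrap_g_root_neq i j :
  In i bracketed -> In j bracketed -> Nat.even i = Nat.even j -> (i < j)%nat ->
  wrap (g_root i) <> wrap (g_root j).
Proof.
intros Hi Hj Hp Hij E.
destruct (bracketed_spec i Hi) as [Hin Bi], (bracketed_spec j Hj) as [Hjn Bj].
assert (Hsij : (S i < j)%nat).
{ destruct (Nat.eq_dec j (S i)) as [->|]; [|lia].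
  rewrite Nat.even_succ, <- Nat.negb_even in Hp; destruct (Nat.even i); discriminate. }
pose proof (g_root_lt i j Bi Bj Hsij) as Hlt.
pose proof (g_root_range i Hi); pose proof (g_root_range j Hj).
unfold wrap in E.
destruct (Req_dec_T (g_root i) (2 * PI)), (Req_dec_T (g_root j) (2 * PI)); try lra.
destruct (g_root_spec i Bi) as [[Ri _] _], (g_root_spec j Bj) as [[_ Rj] _].
assert (i = 0%nat) as ->.
{ destruct i as [|i]; [reflexivity|].
  pose proof (grid_lt n 0 (S i) n_pos (Nat.lt_0_succ i)); rewrite grid_0 in *; lra. }
assert (S j = n) as Hj1.
{ destruct (Nat.eq_dec (S j) n) as [|Hne]; [assumption|].
  pose proof (grid_lt n (S j) n n_pos ltac:(lia)); rewrite grid_n in * by exact n_pos; lra. }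
rewrite <- Hj1, Nat.even_succ, <- Nat.negb_even in n_even; simpl in Hp.
rewrite <- Hp in n_even; discriminate.
Qed.

Lemma parity_roots_NoDup e : NoDup (parity_roots e).
Proof.
apply NoDup_map_NoDup_ForallPairs; [|apply NoDup_filter, NoDup_filter, seq_NoDup].
assert (Hin : forall j, In j (filter (fun j => Bool.eqb (Nat.even j) e) bracketed) ->
                In j bracketed /\ Nat.even j = e).
{ intros j Hj; apply filter_In in Hj as [Hj He]; split; [exact Hj|].
  apply Bool.eqb_prop; exact He. }
intros x y Hx Hy E.
destruct (Hin x Hx) as [Bx Ex], (Hin y Hy) as [By Ey].
destruct (Nat.lt_total x y) as [Hxy|[Hxy|Hxy]]; [| exact Hxy |]; exfalso.
- exact (wrap_g_root_neq x y Bx By (eq_trans Ex (eq_sym Ey)) Hxy E).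
- exact (wrap_g_root_neq y x By Bx (eq_trans Ey (eq_sym Ex)) Hxy (eq_sym E)).
Qed.

Lemma parity_roots_length : exists e, (length bracketed <= 2 * length (parity_roots e))%nat.
Proof.
pose proof (filter_length (fun j => Bool.eqb (Nat.even j) true) bracketed) as Hl.
rewrite (filter_ext (fun j => negb (Bool.eqb (Nat.even j) true))
                    (fun j => Bool.eqb (Nat.even j) false)) in Hl
  by (intros j; destruct (Nat.even j); reflexivity).
unfold parity_roots; destruct (Nat.le_gt_cases
  (length (filter (fun j => Bool.eqb (Nat.even j) false) bracketed))
  (length (filter (fun j => Bool.eqb (Nat.even j) true) bracketed))).
- exists true; rewrite length_map; lia.
- exists false; rewrite length_map; lia.
Qed.

End SignChanges.

Definition rs_gap (b : bool) (k : nat) (t : R) : R := Rk b k t - INR (2 ^ k).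
Definition rs_defect (K : nat) (t : R) : R := 4 * Rk true K t - INR (2 ^ S (S K)).

Lemma continuity_rs_gap b k : continuity (rs_gap b k).
Proof.
apply continuity_minus; [apply continuity_sqmod_on_circle|].
apply continuity_const; now intros ? ?.
Qed.

Lemma continuity_rs_defect K : continuity (rs_defect K).
Proof.
apply continuity_minus; [apply continuity_scal, continuity_sqmod_on_circle|].
apply continuity_const; now intros ? ?.
Qed.

Lemma rs_gap_2PI b k : rs_gap b k (2 * PI) = rs_gap b k 0.
Proof. unfold rs_gap; rewrite !Rk_sqmod, sqmod_on_circle_2PI; reflexivity. Qed.

Lemma rs_gap_alternation b K j :
  let n := (2 ^ S (S K))%nat in
  rs_gap b (S (S K)) (grid n j) * rs_gap b (S (S K)) (grid n (S j))
  = - (rs_defect K (grid n j) * rs_defect K (grid n (S j))).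
Proof.
intros n; unfold rs_gap, rs_defect; rewrite !Rk_grid; fold n; simpl pow.
assert (Hs : IZR (rs_sign b) * IZR (rs_sign b) = 1) by (destruct b; simpl; ring).
transitivity (- (IZR (rs_sign b) * IZR (rs_sign b)) * ((-1) ^ j * (-1) ^ j)
              * ((4 * Rk true K (grid n j) - INR n) * (4 * Rk true K (grid n (S j)) - INR n)));
  [ring|].
rewrite Hs, <- Rpow_mult_distr; replace (-1 * -1) with 1 by ring; rewrite pow1; ring.
Qed.

Lemma rs_defect_zeros K :
  (forall t, rs_defect K t = 0) \/ period_zeros_le (rs_defect K) (2 * (2 ^ K - 1)).
Proof.
apply cos_poly_zeros, cos_poly_add; [apply cos_poly_scal | apply cos_poly_const].
exact (cos_poly_sqmod_on_circle (rs_coef true K) (2 ^ K)).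
Qed.

Lemma rs_bracketed_length b K :
  (2 * 2 ^ K + 2 <= length (bracketed (2 ^ S (S K)) (rs_gap b (S (S K)))))%nat.
Proof.
pose proof (Nat.pow_nonzero 2 K ltac:(lia)).
assert (Hn : (2 ^ S (S K) = 4 * 2 ^ K)%nat) by (simpl; lia).
pose proof (bracketed_length (2 ^ S (S K)) (rs_gap b (S (S K))) (rs_defect K)
              ltac:(lia) (continuity_rs_defect K) (rs_gap_alternation b K) _
              (rs_defect_zeros K)).
lia.
Qed.

Theorem theorem2p1 (usesP : bool) (k : nat) (hk : (2 <= k)%nat) :
  let n := (2 ^ k)%nat in
  (exists ts : list R,
      NoDup ts
      /\ (forall t, In t ts -> 0 <= t < 2 * PI /\ Rk usesP k t = INR n)
      /\ INR (length ts) >= INR n / 4 + 1)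
  /\
  (exists js : list nat,
      NoDup js
      /\ (forall j, In j js ->
            (j < n)%nat
            /\ exists t, 2 * PI * INR j / INR n <= t <= 2 * PI * INR (S j) / INR n
                         /\ Rk usesP k t = INR n)
      /\ INR (length js) >= INR n / 2 + 2).
Proof.
destruct k as [|[|K]]; [lia | lia | intros n].
assert (HnR : INR n = 4 * INR (2 ^ K)) by (unfold n; rewrite !pow_INR; simpl; ring).
assert (n_pos : (0 < n)%nat) by (apply Nat.neq_0_lt_0, Nat.pow_nonzero; lia).
assert (n_even : Nat.even n = true) by (unfold n; rewrite Nat.pow_succ_r', Nat.even_mul; reflexivity).
set (g := rs_gap usesP (S (S K))); set (g_cont := continuity_rs_gap usesP (S (S K))).
pose proof (rs_bracketed_length usesP K) as Hlen; fold n g in Hlen.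
split.
- destruct (parity_roots_length n g n_pos g_cont) as [e He].
  exists (parity_roots n g g_cont e); split; [|split].
  + exact (parity_roots_NoDup n g n_pos g_cont n_even e).
  + intros t Ht.
    destruct (parity_roots_zeros n g n_pos g_cont (rs_gap_2PI _ _) e t Ht) as [Ht' Hg].
    split; [exact Ht' | exact (Rminus_diag_uniq _ _ Hg)].
  + assert (Hl : (2 ^ K + 1 <= length (parity_roots n g g_cont e))%nat) by lia.
    apply le_INR in Hl; rewrite plus_INR in Hl; simpl (INR 1) in Hl; lra.
- exists (bracketed n g); split; [|split].
  + apply NoDup_filter, seq_NoDup.
  + intros j Hj; destruct (bracketed_spec n g n_pos j Hj) as [Hjn Bj].
    destruct (g_root_spec n g n_pos g_cont j Bj) as [Hr Hg].
    split; [exact Hjn | exists (g_root n g g_cont j)].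
    split; [exact Hr | exact (Rminus_diag_uniq _ _ Hg)].
  + apply le_INR in Hlen; rewrite plus_INR, mult_INR in Hlen; simpl (INR 2) in Hlen; lra.
Qed.
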